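(* Let $T>0$ and $0<\tau_0\leq T$. Let $\mu\colon[0,\tau_0]\to[0,+\infty[$ be a modulus of continuity, i.e. a continuous, concave, strictly increasing function with $\mu(0)=0$. Let $\nu\colon\,]0,T]\to\,]0,+\infty[$ be a non-decreasing continuous function such that for some $\kappa>0$, $$\nu(t/2)\geq\kappa\,\nu(t)\quad\text{for all } t\in\,]0,T].$$ Let $a\colon[0,T]\to\mathbb R$ be a bounded function for which there is a constant $C>0$ with $$|a(t+\tau)-a(t)|\leq \frac{C}{\nu(t)}\mu(\tau)\quad\text{whenever } 0\leq\tau\leq\tau_0,\ t,t+\tau\in\,]0,T].$$ Let $\rho\in C^\infty(\mathbb R)$ with $\operatorname{supp}\rho\subset[-1,1]$, $\rho\geq0$, $\int_{\mathbb R}\rho(s)\,ds=1$, and set $\rho_\epsilon(s)=\frac1\epsilon\rho(s/\epsilon)$. For $0<\epsilon\leq\tau_0$ define $$\tilde a_\epsilon(t)=\begin{cases}a(\epsilon)& t\leq\epsilon,\\ a(t)&\epsilon\leq t\leq T,\\ a(T)& T\leq t,\end{cases}\qquad a_\epsilon(t)=\int_{-\epsilon}^{\epsilon}\rho_\epsilon(s)\tilde a_\epsilon(t-s)\,ds,\quad t\in\mathbb R.$$ Then there exist constants $C',C''>0$, depending only on $C$, $\rho$, $\kappa$ and $\|a\|_\infty$, such that for all $0<\epsilon\leq\tau_0$ and all $t\in\,]0,T]$, $$|a_\epsilon(t)-\tilde a_\epsilon(t)|\leq C'\min\Big\{1,\frac{\mu(\epsilon)}{\nu(t)}\Big\}\quad\text{and}\quad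 |a_\epsilon'(t)|\leq \frac{C''}{\epsilon}\min\Big\{1,\frac{\mu(\epsilon)}{\nu(t)}\Big\}.$$ *)

From Stdlib Require Import Reals Lra.
From Coquelicot Require Import Coquelicot.
Open Scope R_scope.

Definition continuous_on_set (D : R -> Prop) (f : R -> R) : Prop :=
  forall x, D x -> filterlim f (within D (locally x)) (locally (f x)).

Definition modulus_of_continuity (tau0 : R) (mu : R -> R) : Prop :=
  (forall x, 0 <= x <= tau0 -> 0 <= mu x) /\
  continuous_on_set (fun x => 0 <= x <= tau0) mu /\
  (forall x y l, 0 <= x <= tau0 -> 0 <= y <= tau0 -> 0 <= l <= 1 ->
     l * mu x + (1 - l) * mu y <= mu (l * x + (1 - l) * y)) /\
  (forall x y, 0 <= x <= tau0 -> 0 <= y <= tau0 -> x < y -> mu x < mu y) /\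
  mu 0 = 0.

Definition smooth (f : R -> R) : Prop := forall n x, ex_derive_n f n x.

Definition rho_eps (rho : R -> R) (eps s : R) : R := / eps * rho (s / eps).

Definition atilde (a : R -> R) (T eps t : R) : R :=
  if Rle_dec t eps then a eps else if Rle_dec t T then a t else a T.

Definition a_eps (rho a : R -> R) (T eps t : R) : R :=
  RInt (fun s => rho_eps rho eps s * atilde a T eps (t - s)) (- eps) eps.

From Stdlib Require Import Reals Lra.
From Coquelicot Require Import Coquelicot.
Open Scope R_scope.

(* [a_eps t] averages [atilde] over [[t - eps, t + eps]] against the probability density
   [rho_eps], so [a_eps t - atilde t] is bounded by the oscillation of [atilde] on that
   window.  So is [eps] times the derivative: [a_eps' t = \int rho_eps'(t - u) atilde u du],
   and since [\int rho_eps' = 0] one may replace [atilde u] by [atilde u - atilde t], while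
   [\int |rho_eps'| = O(1 / eps)].  The oscillation is at most [2 sup |a|]; and as clipping to
   [[eps, T]] is 1-Lipschitz and keeps the window above [t / 2], it is also at most
   [C mu(eps) / nu(t / 2) <= (C / kappa) mu(eps) / nu(t)]. *)

Lemma continuous_Rmult (f g : R -> R) x :
  continuous f x -> continuous g x -> continuous (fun y => f y * g y) x.
Proof. apply (continuous_mult (K := R_AbsRing)). Qed.

Lemma continuous_Rminus (f g : R -> R) x :
  continuous f x -> continuous g x -> continuous (fun y => f y - g y) x.
Proof. apply (continuous_minus (V := R_NormedModule)). Qed.

Lemma ex_RInt_continuous_R (f : R -> R) a b :
  (forall x, continuous f x) -> ex_RInt f a b.
Proof. intros Hf. apply (ex_RInt_continuous (V := R_CompleteNormedModule)); auto. Qed.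

Lemma RInt_eq_0 (f : R -> R) a b :
  (forall x, Rmin a b < x < Rmax a b -> f x = 0) -> RInt f a b = 0.
Proof.
  intros Hf. rewrite (RInt_ext f (fun _ => 0)) by exact Hf.
  rewrite RInt_const. apply Rmult_0_r.
Qed.

Lemma RInt_mul_sub_const (f g : R -> R) c a b :
  (forall x, continuous f x) -> (forall x, continuous g x) ->
  RInt (fun x => f x * (g x - c)) a b = RInt (fun x => f x * g x) a b - c * RInt f a b.
Proof.
  intros Hf Hg.
  rewrite (RInt_ext (V := R_CompleteNormedModule) _ (fun x => minus (f x * g x) (scal c (f x))))
    by (intros; unfold minus, plus, opp, scal; simpl; unfold mult; simpl; ring).
  rewrite (RInt_minus (V := R_CompleteNormedModule)), (RInt_scal (V := R_CompleteNormedModule)).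
  - reflexivity.
  - now apply ex_RInt_continuous_R.
  - apply ex_RInt_continuous_R. intros; now apply continuous_Rmult.
  - apply (ex_RInt_scal (V := R_NormedModule)). now apply ex_RInt_continuous_R.
Qed.

Lemma continuous_comp_sub (g : R -> R) t s :
  (forall x, continuous g x) -> continuous (fun s => g (t - s)) s.
Proof.
  intros Hg. apply (continuous_comp (U := R_UniformSpace) (V := R_UniformSpace) (fun s => t - s)).
  - apply (ex_derive_continuous (K := R_AbsRing) (V := R_NormedModule)). auto_derive. easy.
  - apply Hg.
Qed.

Section Kernel.

Variable rho : R -> R.
Hypothesis rho_smooth : smooth rho.
Hypothesis rho_out : forall s, 1 < Rabs s -> rho s = 0.

Lemma ex_derive_rho x : ex_derive rho x.
Proof. exact (rho_smooth 1%nat x). Qed.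

Lemma continuous_rho x : continuous rho x.
Proof. exact (ex_derive_continuous rho x (ex_derive_rho x)). Qed.

Lemma continuous_Derive_rho x : continuous (Derive rho) x.
Proof. exact (ex_derive_continuous (Derive rho) x (rho_smooth 2%nat x)). Qed.

Lemma Derive_rho_out y : 1 < Rabs y -> Derive rho y = 0.
Proof.
  intros Hy. rewrite (Derive_ext_loc rho (fun _ => 0)).
  - apply Derive_const.
  - assert (Hd : 0 < Rabs y - 1) by lra.
    exists (mkposreal _ Hd). intros z Hz. simpl in z. apply rho_out.
    change (Rabs (z - y) < Rabs y - 1) in Hz.
    pose proof (Rabs_triang_inv y (y - z)) as Htri.
    replace (y - (y - z)) with (z : R) in Htri by ring.
    rewrite Rabs_minus_sym in Hz. lra.
Qed.

Lemma Derive_rho_bounded : exists P, 0 < P /\ forall y, Rabs (Derive rho y) <= P.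
Proof.
  destruct (continuity_ab_maj (fun x => Rabs (Derive rho x)) (-1) 1) as [m [Hm _]].
  - lra.
  - intros c _. apply continuity_pt_filterlim, continuous_Rabs_comp, continuous_Derive_rho.
  - exists (Rmax 1 (Rabs (Derive rho m))). split; [apply Rlt_le_trans with 1; [lra | apply Rmax_l] |].
    intros y. destruct (Rle_dec (Rabs y) 1) as [Hy | Hy].
    + eapply Rle_trans; [apply Hm, Rabs_le_between, Hy | apply Rmax_r].
    + rewrite Derive_rho_out, Rabs_R0 by lra. apply Rle_trans with 1; [lra | apply Rmax_l].
Qed.

Lemma RInt_rho :
  is_RInt_gen rho (Rbar_locally m_infty) (Rbar_locally p_infty) 1 -> RInt rho (-1) 1 = 1.
Proof.
  intros Hint.
  assert (Hex : forall a b, ex_RInt rho a b).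
  { intros. apply ex_RInt_continuous_R, continuous_rho. }
  assert (Hwide : forall a b, a < -1 -> 1 < b -> RInt rho a b = RInt rho (-1) 1).
  { intros a b Ha Hb.
    rewrite <- (RInt_Chasles rho a (-1) b), <- (RInt_Chasles rho (-1) 1 b) by auto.
    rewrite (RInt_eq_0 rho a (-1)), (RInt_eq_0 rho 1 b).
    - change (0 + (RInt rho (-1) 1 + 0) = RInt rho (-1) 1). ring.
    - intros x. rewrite Rmin_left, Rmax_right by lra. intros Hx.
      apply rho_out. rewrite Rabs_right; lra.
    - intros x. rewrite Rmin_left, Rmax_right by lra. intros Hx.
      apply rho_out. rewrite Rabs_left; lra. }
  apply (filterlimi_locally_unique (F := filter_prod (Rbar_locally m_infty) (Rbar_locally p_infty))
          (fun ab => is_RInt rho (fst ab) (snd ab))).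
  - apply filter_forall. intros ab y1 y2 H1 H2.
    now rewrite <- (is_RInt_unique _ _ _ _ H1), <- (is_RInt_unique _ _ _ _ H2).
  - intros Q HQ. apply (Filter_prod _ _ _ (fun x => x < -1) (fun y => 1 < y)).
    + now exists (-1).
    + now exists 1.
    + intros x y Hx Hy. exists (RInt rho (-1) 1). split.
      * simpl. rewrite <- (Hwide x y Hx Hy). apply (RInt_correct (V := R_CompleteNormedModule)), Hex.
      * now apply locally_singleton.
  - exact Hint.
Qed.

Definition mollify (eps : R) (f : R -> R) (t : R) : R :=
  RInt (fun s => rho_eps rho eps s * f (t - s)) (- eps) eps.

Section Mollifier.

Variable eps : R.
Hypothesis eps_pos : 0 < eps.

Lemma is_derive_rho_eps s :
  is_derive (rho_eps rho eps) s (Derive rho (s / eps) / eps ^ 2).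
Proof.
  unfold rho_eps. auto_derive; [apply ex_derive_rho |].
  change (fun x => rho x) with rho. unfold Rdiv. field. lra.
Qed.

Lemma continuous_rho_eps s : continuous (rho_eps rho eps) s.
Proof. exact (ex_derive_continuous _ _ (ex_intro _ _ (is_derive_rho_eps s))). Qed.

Lemma Derive_rho_eps s : Derive (rho_eps rho eps) s = Derive rho (s / eps) / eps ^ 2.
Proof. apply is_derive_unique, is_derive_rho_eps. Qed.

Lemma continuous_Derive_rho_eps s : continuous (Derive (rho_eps rho eps)) s.
Proof.
  apply (continuous_ext (fun s => Derive rho (s / eps) / eps ^ 2)).
  - intros; symmetry; apply Derive_rho_eps.
  - apply continuous_Rmult; [| apply continuous_const].
    apply (continuous_comp (U := R_UniformSpace) (V := R_UniformSpace) (fun s => s / eps)).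
    + apply (ex_derive_continuous (K := R_AbsRing) (V := R_NormedModule)). auto_derive. lra.
    + apply continuous_Derive_rho.
Qed.

Lemma Rabs_scaled_gt_1 s : eps < Rabs s -> 1 < Rabs (s / eps).
Proof.
  intros Hs. unfold Rdiv. rewrite Rabs_mult, Rabs_inv, (Rabs_right eps) by lra.
  apply (Rmult_lt_reg_r eps); [lra |]. rewrite Rmult_assoc, Rinv_l by lra. lra.
Qed.

Lemma rho_eps_out s : eps < Rabs s -> rho_eps rho eps s = 0.
Proof. intros Hs. unfold rho_eps. rewrite rho_out by now apply Rabs_scaled_gt_1. ring. Qed.

Lemma Derive_rho_eps_out s : eps < Rabs s -> Derive (rho_eps rho eps) s = 0.
Proof. intros Hs. rewrite Derive_rho_eps, Derive_rho_out by now apply Rabs_scaled_gt_1. unfold Rdiv. ring. Qed.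

Lemma Derive_rho_eps_le P s :
  (forall y, Rabs (Derive rho y) <= P) -> Rabs (Derive (rho_eps rho eps) s) <= P / eps ^ 2.
Proof.
  intros HP. rewrite Derive_rho_eps. unfold Rdiv.
  rewrite Rabs_mult, (Rabs_right (/ eps ^ 2)) by (apply Rle_ge, Rlt_le, Rinv_0_lt_compat, pow_lt, eps_pos).
  apply Rmult_le_compat_r; [apply Rlt_le, Rinv_0_lt_compat, pow_lt, eps_pos | apply HP].
Qed.

Lemma RInt_rho_eps : RInt rho (-1) 1 = 1 -> RInt (rho_eps rho eps) (- eps) eps = 1.
Proof.
  intros Hmass.
  rewrite (RInt_ext (V := R_CompleteNormedModule) (rho_eps rho eps)
             (fun s => scal (/ eps) (rho (/ eps * s + 0))))
    by (intros; unfold rho_eps, scal; simpl; unfold mult; simpl; f_equal; f_equal; unfold Rdiv; ring).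
  rewrite (RInt_comp_lin (V := R_CompleteNormedModule)).
  - replace (/ eps * - eps + 0) with (-1) by (field; lra).
    replace (/ eps * eps + 0) with 1 by (field; lra). exact Hmass.
  - apply ex_RInt_continuous_R, continuous_rho.
Qed.

Lemma RInt_Derive_rho_eps_window t :
  RInt (fun u => Derive (rho_eps rho eps) (t - u)) (t - 2 * eps) (t + 2 * eps) = 0.
Proof.
  apply (is_RInt_unique (V := R_CompleteNormedModule)).
  replace 0 with (minus (- rho_eps rho eps (t - (t + 2 * eps)))
                        (- rho_eps rho eps (t - (t - 2 * eps)))).
  - apply (is_RInt_derive (V := R_CompleteNormedModule) (fun u => - rho_eps rho eps (t - u))).
    + intros u _. auto_derive.
      * eexists. apply is_derive_rho_eps.
      * change (fun x => rho_eps rho eps x) with (rho_eps rho eps).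
        replace (t + - u) with (t - u) by ring. ring.
    + intros u _. apply continuous_comp_sub, continuous_Derive_rho_eps.
  - rewrite (rho_eps_out (t - (t + 2 * eps))), (rho_eps_out (t - (t - 2 * eps))).
    + unfold minus, plus, opp; simpl. ring.
    + replace (t - (t - 2 * eps)) with (2 * eps) by ring. rewrite Rabs_right; lra.
    + replace (t - (t + 2 * eps)) with (- (2 * eps)) by ring. rewrite Rabs_Ropp, Rabs_right; lra.
Qed.

Section Convolution.

Variable f : R -> R.
Hypothesis f_continuous : forall x, continuous f x.

Lemma mollify_sub_le t B :
  (forall s, 0 <= rho s) -> RInt rho (-1) 1 = 1 ->
  (forall u, Rabs (u - t) <= eps -> Rabs (f u - f t) <= B) ->
  Rabs (mollify eps f t - f t) <= B.
Proof.
  intros rho_ge0 Hmass Hosc.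
  assert (Hker_ge0 : forall s, 0 <= rho_eps rho eps s).
  { intros s. apply Rmult_le_pos; [apply Rlt_le, Rinv_0_lt_compat, eps_pos | apply rho_ge0]. }
  assert (Hdiff : forall s, continuous (fun s => f (t - s) - f t) s).
  { intros s. apply (continuous_comp_sub (fun u => f u - f t)). intros x.
    apply continuous_Rminus; [apply f_continuous | apply continuous_const]. }
  assert (Hcentered : mollify eps f t - f t
                      = RInt (fun s => rho_eps rho eps s * (f (t - s) - f t)) (- eps) eps).
  { rewrite RInt_mul_sub_const, RInt_rho_eps;
      [unfold mollify; ring | exact Hmass | apply continuous_rho_eps |].
    intros; now apply continuous_comp_sub. }
  rewrite Hcentered.
  eapply Rle_trans.
  { apply abs_RInt_le; [lra |]. apply ex_RInt_continuous_R. intros s.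
    apply continuous_Rmult; [apply continuous_rho_eps | apply Hdiff]. }
  apply Rle_trans with (RInt (fun s => rho_eps rho eps s * B) (- eps) eps).
  - apply RInt_le; [lra | | |].
    + apply ex_RInt_continuous_R. intros s. apply continuous_Rabs_comp.
      apply continuous_Rmult; [apply continuous_rho_eps | apply Hdiff].
    + apply ex_RInt_continuous_R. intros s.
      apply continuous_Rmult; [apply continuous_rho_eps | apply continuous_const].
    + intros s Hs. rewrite Rabs_mult, (Rabs_right (rho_eps rho eps s)) by (apply Rle_ge, Hker_ge0).
      apply Rmult_le_compat_l; [apply Hker_ge0 |]. apply Hosc.
      replace (t - s - t) with (- s) by ring. rewrite Rabs_Ropp. apply Rabs_le_between. lra.
  - rewrite (RInt_ext (V := R_CompleteNormedModule) _ (fun s => scal B (rho_eps rho eps s)))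
      by (intros; unfold scal; simpl; unfold mult; simpl; ring).
    rewrite (RInt_scal (V := R_CompleteNormedModule)), RInt_rho_eps by
      (exact Hmass || apply ex_RInt_continuous_R, continuous_rho_eps).
    unfold scal; simpl; unfold mult; simpl. lra.
Qed.

(* Fixed bounds independent of [x] are what allow differentiating under the integral. *)
Lemma mollify_window x t :
  Rabs (x - t) < eps ->
  mollify eps f x = RInt (fun u => rho_eps rho eps (x - u) * f u) (t - 2 * eps) (t + 2 * eps).
Proof.
  intros Hxt.
  set (g := fun u => rho_eps rho eps (x - u) * f u).
  assert (Hg : forall u, continuous g u).
  { intros u. apply continuous_Rmult; [| apply f_continuous].
    apply continuous_comp_sub, continuous_rho_eps. }
  assert (Hex : forall a b, ex_RInt g a b) by (intros; now apply ex_RInt_continuous_R).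
  assert (Hg_out : forall u, eps < Rabs (x - u) -> g u = 0).
  { intros u Hu. unfold g. rewrite rho_eps_out by exact Hu. ring. }
  assert (Hreflect : mollify eps f x = RInt g (x - eps) (x + eps)).
  { replace (x - eps) with (-1 * eps + x) by ring.
    replace (x + eps) with (-1 * - eps + x) by ring.
    rewrite <- (RInt_comp_lin (V := R_CompleteNormedModule)) by apply Hex.
    rewrite <- (opp_RInt_swap (V := R_CompleteNormedModule)),
            (RInt_scal (V := R_CompleteNormedModule)).
    - unfold mollify, g, opp, scal; simpl; unfold mult; simpl.
      rewrite (RInt_ext (fun s => rho_eps rho eps s * f (x - s))
                        (fun y => rho_eps rho eps (x - (-1 * y + x)) * f (-1 * y + x)))
        by (intros; f_equal; f_equal; ring).
      lra.
    - apply ex_RInt_continuous_R. intros y.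
      apply (continuous_comp (U := R_UniformSpace) (V := R_UniformSpace) (fun y => -1 * y + x)).
      + apply (ex_derive_continuous (K := R_AbsRing) (V := R_NormedModule)). auto_derive. easy.
      + apply Hg.
    - apply (ex_RInt_swap (V := R_NormedModule)), (ex_RInt_comp_lin (V := R_NormedModule)), Hex. }
  rewrite Hreflect. apply Rabs_def2 in Hxt.
  rewrite <- (RInt_Chasles g (t - 2 * eps) (x - eps) (t + 2 * eps)),
          <- (RInt_Chasles g (x - eps) (x + eps) (t + 2 * eps)) by apply Hex.
  rewrite (RInt_eq_0 g (t - 2 * eps) (x - eps)), (RInt_eq_0 g (x + eps) (t + 2 * eps)).
  - unfold plus; simpl. now rewrite Rplus_0_l, Rplus_0_r.
  - intros u. rewrite Rmin_left, Rmax_right by lra. intros Hu.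
    apply Hg_out. rewrite Rabs_left; lra.
  - intros u. rewrite Rmin_left, Rmax_right by lra. intros Hu.
    apply Hg_out. rewrite Rabs_right; lra.
Qed.

Lemma is_derive_mollify t :
  is_derive (mollify eps f) t
    (RInt (fun u => Derive (rho_eps rho eps) (t - u) * f u) (t - 2 * eps) (t + 2 * eps)).
Proof.
  set (k := fun x u => Derive (rho_eps rho eps) (x - u) * f u).
  assert (Hk : forall x u, is_derive (fun z => rho_eps rho eps (z - u) * f u) x (k x u)).
  { intros x u. unfold k. auto_derive.
    - eexists. apply is_derive_rho_eps.
    - change (fun z => rho_eps rho eps z) with (rho_eps rho eps).
      replace (x + - u) with (x - u) by ring. ring. }
  assert (Hk_cont : forall x u, continuity_2d_pt k x u).
  { intros x u. apply continuity_2d_pt_mult.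
    - apply (continuity_1d_2d_pt_comp (Derive (rho_eps rho eps)) (fun x u => x - u)).
      + apply continuity_pt_filterlim, continuous_Derive_rho_eps.
      + apply continuity_2d_pt_minus; [apply continuity_2d_pt_id1 | apply continuity_2d_pt_id2].
    - apply (continuity_1d_2d_pt_comp f (fun _ u => u)).
      + apply continuity_pt_filterlim, f_continuous.
      + apply continuity_2d_pt_id2. }
  apply is_derive_ext_loc
    with (fun x => RInt (fun u => rho_eps rho eps (x - u) * f u) (t - 2 * eps) (t + 2 * eps)).
  - exists (mkposreal eps eps_pos). intros x Hx. symmetry. now apply mollify_window.
  - rewrite (RInt_ext (fun u => k t u) (fun u => Derive (fun z => rho_eps rho eps (z - u) * f u) t))
      by (intros; symmetry; apply is_derive_unique, Hk).
    apply (is_derive_RInt_param (fun x u => rho_eps rho eps (x - u) * f u)).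
    + apply filter_forall. intros x u _. exists (k x u). apply Hk.
    + intros u _. apply continuity_2d_pt_ext with k; [| apply Hk_cont].
      intros; symmetry; apply is_derive_unique, Hk.
    + apply filter_forall. intros x. apply ex_RInt_continuous_R. intros u.
      apply continuous_Rmult; [apply continuous_comp_sub, continuous_rho_eps | apply f_continuous].
Qed.

Lemma Derive_mollify_le t P B :
  (forall y, Rabs (Derive rho y) <= P) ->
  (forall u, Rabs (u - t) <= eps -> Rabs (f u - f t) <= B) ->
  Rabs (Derive (mollify eps f) t) <= 4 * P * B / eps.
Proof.
  intros HP Hosc.
  assert (HP0 : 0 <= P) by (eapply Rle_trans; [apply Rabs_pos | apply (HP 0)]).
  assert (HB0 : 0 <= B).
  { eapply Rle_trans; [apply Rabs_pos | apply Hosc]. rewrite Rminus_eq_0, Rabs_R0. lra. }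
  assert (Hker_cont : forall u, continuous (fun u => Derive (rho_eps rho eps) (t - u)) u).
  { intros u. apply continuous_comp_sub, continuous_Derive_rho_eps. }
  rewrite (is_derive_unique _ _ _ (is_derive_mollify t)).
  assert (Hcentered :
    RInt (fun u => Derive (rho_eps rho eps) (t - u) * f u) (t - 2 * eps) (t + 2 * eps)
    = RInt (fun u => Derive (rho_eps rho eps) (t - u) * (f u - f t)) (t - 2 * eps) (t + 2 * eps)).
  { rewrite RInt_mul_sub_const, RInt_Derive_rho_eps_window by (apply Hker_cont || apply f_continuous).
    now rewrite Rmult_0_r, Rminus_0_r. }
  rewrite Hcentered.
  eapply Rle_trans.
  - apply (abs_RInt_le_const _ _ _ (P / eps ^ 2 * B)); [lra | |].
    + apply ex_RInt_continuous_R. intros u. apply continuous_Rmult; [apply Hker_cont |].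
      apply continuous_Rminus; [apply f_continuous | apply continuous_const].
    + intros u _. rewrite Rabs_mult.
      destruct (Rle_dec (Rabs (u - t)) eps) as [Hu | Hu].
      * apply Rmult_le_compat; [apply Rabs_pos | apply Rabs_pos | now apply Derive_rho_eps_le | apply Hosc, Hu].
      * rewrite Derive_rho_eps_out, Rabs_R0, Rmult_0_l.
        -- apply Rmult_le_pos; [apply Rmult_le_pos; [exact HP0 |] | exact HB0].
           apply Rlt_le, Rinv_0_lt_compat, pow_lt, eps_pos.
        -- rewrite Rabs_minus_sym. lra.
  - right. field. lra.
Qed.

End Convolution.

End Mollifier.

End Kernel.

Definition clip (lo hi u : R) : R := Rmax lo (Rmin u hi).

Lemma atilde_clip a T eps u : eps <= T -> atilde a T eps u = a (clip eps T u).
Proof.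
  intros H. unfold atilde, clip.
  destruct (Rle_dec u eps); [| destruct (Rle_dec u T)].
  - now rewrite Rmin_left, Rmax_left by lra.
  - now rewrite Rmin_left, Rmax_right by lra.
  - now rewrite Rmin_right, Rmax_right by lra.
Qed.

Lemma clip_range lo hi u : lo <= hi -> lo <= clip lo hi u <= hi.
Proof. intros H. unfold clip, Rmax, Rmin. repeat destruct Rle_dec; lra. Qed.

Lemma clip_dist_le lo hi u v : Rabs (clip lo hi u - clip lo hi v) <= Rabs (u - v).
Proof. unfold clip, Rmax, Rmin, Rabs. repeat destruct Rle_dec; repeat destruct Rcase_abs; lra. Qed.

Lemma clip_ge_half lo hi u t : 0 < t <= hi -> Rabs (u - t) <= lo -> t / 2 <= clip lo hi u.
Proof. intros Ht Hu. unfold clip, Rmax, Rmin, Rabs in *. repeat destruct Rle_dec; destruct Rcase_abs; lra. Qed.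

Lemma le_Rmax_mul_Rmin x A B r :
  0 <= r -> x <= A -> x <= B * r -> x <= Rmax 1 (Rmax A B) * Rmin 1 r.
Proof.
  intros Hr HA HB.
  pose proof (Rmax_l 1 (Rmax A B)). pose proof (Rmax_r 1 (Rmax A B)).
  pose proof (Rmax_l A B). pose proof (Rmax_r A B).
  unfold Rmin. destruct Rle_dec.
  - lra.
  - eapply Rle_trans; [apply HB | apply Rmult_le_compat_r; lra].
Qed.

Section Modulus.

Variables (tau0 : R) (mu : R -> R).
Hypothesis mu_modulus : modulus_of_continuity tau0 mu.

Lemma modulus_ge0 x : 0 <= x <= tau0 -> 0 <= mu x.
Proof. apply mu_modulus. Qed.

Lemma modulus_le x y : 0 <= x <= tau0 -> 0 <= y <= tau0 -> x <= y -> mu x <= mu y.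
Proof.
  destruct mu_modulus as [_ [_ [_ [Hlt _]]]]. intros Hx Hy Hxy.
  destruct (Req_dec x y) as [-> | Hne]; [lra |]. left. apply Hlt; auto. lra.
Qed.

Lemma modulus_small e :
  0 < tau0 -> 0 < e -> exists d, 0 < d /\ forall r, 0 <= r <= tau0 -> r < d -> mu r < e.
Proof.
  destruct mu_modulus as [_ [Hcont [_ [_ Hmu0]]]]. intros Htau0 He.
  destruct (Hcont 0 (conj (Rle_refl 0) (Rlt_le _ _ Htau0)) _
              (locally_ball (mu 0) (mkposreal e He))) as [d Hd].
  exists d. split; [apply cond_pos |]. intros r Hr Hrd.
  assert (Hball : ball 0 d r).
  { change (Rabs (r - 0) < d). rewrite Rminus_0_r, Rabs_right; lra. }
  specialize (Hd r Hball Hr). change (Rabs (mu r - mu 0) < e) in Hd.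
  rewrite Hmu0, Rminus_0_r in Hd. apply Rabs_def2 in Hd. lra.
Qed.

End Modulus.

Section Extension.

Variables (T tau0 C kappa M : R) (mu nu a : R -> R).
Hypothesis tau0_pos : 0 < tau0.
Hypothesis tau0_le_T : tau0 <= T.
Hypothesis C_pos : 0 < C.
Hypothesis kappa_pos : 0 < kappa.
Hypothesis mu_modulus : modulus_of_continuity tau0 mu.
Hypothesis nu_pos : forall t, 0 < t <= T -> 0 < nu t.
Hypothesis nu_le : forall s t, 0 < s <= T -> 0 < t <= T -> s <= t -> nu s <= nu t.
Hypothesis nu_half : forall t, 0 < t <= T -> nu (t / 2) >= kappa * nu t.
Hypothesis a_bounded : forall t, 0 <= t <= T -> Rabs (a t) <= M.
Hypothesis a_incr : forall tau t, 0 <= tau <= tau0 -> 0 < t <= T -> 0 < t + tau <= T ->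
  Rabs (a (t + tau) - a t) <= C / nu t * mu tau.

Lemma a_dist_le x y :
  0 < x <= T -> 0 < y <= T -> Rabs (x - y) <= tau0 ->
  Rabs (a x - a y) <= C / nu (Rmin x y) * mu (Rabs (x - y)).
Proof.
  intros Hx Hy Hxy. destruct (Rle_dec x y) as [Hle | Hlt].
  - rewrite Rmin_left, Rabs_minus_sym, (Rabs_minus_sym x y), (Rabs_right (y - x)) by lra.
    rewrite Rabs_minus_sym, Rabs_right in Hxy by lra.
    replace y with (x + (y - x)) at 1 by ring. apply a_incr; lra.
  - rewrite Rmin_right, (Rabs_right (x - y)) by lra. rewrite Rabs_right in Hxy by lra.
    replace x with (y + (x - y)) at 1 by ring. apply a_incr; lra.
Qed.

Lemma atilde_dist_le eps u v m :
  0 < eps <= tau0 -> 0 < m <= Rmin (clip eps T u) (clip eps T v) -> Rabs (u - v) <= tau0 ->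
  Rabs (atilde a T eps u - atilde a T eps v) <= C / nu m * mu (Rabs (u - v)).
Proof.
  intros Heps Hm Huv.
  rewrite !atilde_clip by lra.
  pose proof (clip_range eps T u ltac:(lra)) as Hp.
  pose proof (clip_range eps T v ltac:(lra)) as Hq.
  pose proof (clip_dist_le eps T u v) as Hpq.
  set (p := clip eps T u) in *. set (q := clip eps T v) in *.
  assert (Hmin : eps <= Rmin p q <= T) by (unfold Rmin; destruct Rle_dec; lra).
  eapply Rle_trans; [apply a_dist_le; lra |].
  apply Rmult_le_compat.
  - apply Rmult_le_pos; [lra | apply Rlt_le, Rinv_0_lt_compat, nu_pos; lra].
  - apply (modulus_ge0 tau0); [exact mu_modulus |]. split; [apply Rabs_pos | lra].
  - apply Rmult_le_compat_l; [lra |].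
    apply Rinv_le_contravar; [apply nu_pos; lra | apply nu_le; lra].
  - apply (modulus_le tau0); [exact mu_modulus | | |]; try split; try apply Rabs_pos; lra.
Qed.

Lemma atilde_continuous eps v : 0 < eps <= tau0 -> continuous (atilde a T eps) v.
Proof.
  intros Heps. apply continuity_pt_filterlim. intros e He.
  assert (Hnu_eps : 0 < nu eps) by (apply nu_pos; lra).
  destruct (modulus_small tau0 mu mu_modulus (e * nu eps / C)) as [d [Hd Hsmall]]; auto.
  { apply Rmult_lt_0_compat; [apply Rmult_lt_0_compat |]; auto. now apply Rinv_0_lt_compat. }
  exists (Rmin tau0 d). split; [now apply Rmin_pos |].
  intros w [_ Hw]. simpl in Hw |- *. unfold R_dist in Hw |- *.
  pose proof (Rmin_l tau0 d). pose proof (Rmin_r tau0 d).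
  pose proof (clip_range eps T w ltac:(lra)). pose proof (clip_range eps T v ltac:(lra)).
  eapply Rle_lt_trans; [apply (atilde_dist_le eps w v eps); auto; try lra |].
  - split; [lra |]. unfold Rmin at 1. destruct Rle_dec; lra.
  - apply Rlt_le_trans with (C / nu eps * (e * nu eps / C)); [| right; field; lra].
    apply Rmult_lt_compat_l; [apply Rdiv_lt_0_compat; lra |].
    apply Hsmall; [split; [apply Rabs_pos |] |]; lra.
Qed.

Lemma atilde_osc_le eps t u :
  0 < eps <= tau0 -> 0 < t <= T -> Rabs (u - t) <= eps ->
  Rabs (atilde a T eps u - atilde a T eps t)
    <= Rmax 1 (Rmax (2 * M) (C / kappa)) * Rmin 1 (mu eps / nu t).
Proof.
  intros Heps Ht Hut.
  assert (Hnu_t : 0 < nu t) by now apply nu_pos.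
  apply le_Rmax_mul_Rmin.
  - apply Rdiv_le_0_compat; [apply (modulus_ge0 tau0); auto; lra | exact Hnu_t].
  - rewrite !atilde_clip by lra.
    pose proof (clip_range eps T u ltac:(lra)). pose proof (clip_range eps T t ltac:(lra)).
    unfold Rminus. eapply Rle_trans; [apply Rabs_triang |]. rewrite Rabs_Ropp.
    pose proof (a_bounded (clip eps T u) ltac:(lra)).
    pose proof (a_bounded (clip eps T t) ltac:(lra)). lra.
  - pose proof (clip_ge_half eps T u t Ht Hut).
    pose proof (clip_ge_half eps T t t Ht ltac:(rewrite Rminus_eq_0, Rabs_R0; lra)).
    eapply Rle_trans; [apply (atilde_dist_le eps u t (t / 2)); auto; try lra |].
    + split; [lra |]. unfold Rmin at 1. destruct Rle_dec; lra.
    + assert (Hkappa : kappa * nu t <= nu (t / 2)) by (apply Rge_le, nu_half, Ht).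
      replace (C / kappa * (mu eps / nu t)) with (C / (kappa * nu t) * mu eps) by (field; lra).
      apply Rmult_le_compat.
      * apply Rdiv_le_0_compat; [lra | apply nu_pos; lra].
      * apply (modulus_ge0 tau0); auto. split; [apply Rabs_pos | lra].
      * apply Rmult_le_compat_l; [lra |].
        apply Rinv_le_contravar; [apply Rmult_lt_0_compat |]; lra.
      * apply (modulus_le tau0); auto; try split; try apply Rabs_pos; lra.
Qed.

End Extension.


Theorem proposition1 :
  forall (C kappa M : R) (rho : R -> R),
    0 < C -> 0 < kappa ->
    smooth rho ->
    (forall s, 1 < Rabs s -> rho s = 0) ->
    (forall s, 0 <= rho s) ->
    is_RInt_gen rho (Rbar_locally m_infty) (Rbar_locally p_infty) 1 ->
  exists C' C'' : R, 0 < C' /\ 0 < C'' /\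
  forall (T tau0 : R) (mu nu a : R -> R),
    0 < T -> 0 < tau0 -> tau0 <= T ->
    modulus_of_continuity tau0 mu ->
    (forall t, 0 < t <= T -> 0 < nu t) ->
    (forall s t, 0 < s <= T -> 0 < t <= T -> s <= t -> nu s <= nu t) ->
    continuous_on_set (fun t => 0 < t <= T) nu ->
    (forall t, 0 < t <= T -> nu (t / 2) >= kappa * nu t) ->
    (forall t, 0 <= t <= T -> Rabs (a t) <= M) ->
    (forall tau t, 0 <= tau <= tau0 -> 0 < t <= T -> 0 < t + tau <= T ->
       Rabs (a (t + tau) - a t) <= C / nu t * mu tau) ->
    forall eps t, 0 < eps <= tau0 -> 0 < t <= T ->
      Rabs (a_eps rho a T eps t - atilde a T eps t)
        <= C' * Rmin 1 (mu eps / nu t) /\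
      ex_derive (a_eps rho a T eps) t /\
      Rabs (Derive (a_eps rho a T eps) t)
        <= C'' / eps * Rmin 1 (mu eps / nu t).
Proof.
  intros C kappa M rho HC Hkappa Hsmooth Hout Hge0 Hint.
  destruct (Derive_rho_bounded rho Hsmooth Hout) as [P [HP HPbound]].
  pose proof (RInt_rho rho Hsmooth Hout Hint) as Hmass.
  set (K := Rmax 1 (Rmax (2 * M) (C / kappa))).
  assert (HK : 0 < K) by (apply Rlt_le_trans with 1; [lra | apply Rmax_l]).
  exists K, (4 * P * K). split; [exact HK |]. split; [apply Rmult_lt_0_compat; lra |].
  intros T tau0 mu nu a _ Htau0 HtauT Hmu Hnu Hnu_le _ Hhalf Ha Hincr eps t Heps Ht.
  set (f := atilde a T eps).
  assert (Hf : forall x, continuous f x)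
    by (intros; exact (atilde_continuous T tau0 C mu nu a Htau0 HtauT HC Hmu Hnu Hnu_le Hincr eps x Heps)).
  assert (Hosc : forall u, Rabs (u - t) <= eps -> Rabs (f u - f t) <= K * Rmin 1 (mu eps / nu t)).
  { intros u Hu. exact (atilde_osc_le T tau0 C kappa M mu nu a Htau0 HtauT HC Hkappa Hmu Hnu Hnu_le
                          Hhalf Ha Hincr eps t u Heps Ht Hu). }
  assert (Heps_pos : 0 < eps) by lra.
  change (a_eps rho a T eps) with (mollify rho eps f).
  split; [| split].
  - exact (mollify_sub_le rho Hsmooth eps Heps_pos f Hf t _ Hge0 Hmass Hosc).
  - eexists. exact (is_derive_mollify rho Hsmooth Hout eps Heps_pos f Hf t).
  - eapply Rle_trans; [exact (Derive_mollify_le rho Hsmooth Hout eps Heps_pos f Hf t P _ HPbound Hosc) |].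
    right. field. lra.
Qed.
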